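(* Let $A$ be an $n\times n$ Hermitian matrix ($n\ge2$) with eigenvalues $\lambda_1\ge\dots\ge\lambda_n$, and for $k=1,\dots,n$ let $\mu_{k,1}\ge\dots\ge\mu_{k,n-1}$ be the eigenvalues of $A_k$. Then for all $1\le\ell\le r\le n-1$, $$(r-\ell+1)\lambda_\ell+(n-1)\sum_{j=\ell}^r\lambda_{j+1}\le\sum_{k=1}^n\sum_{j=\ell}^r\mu_{k,j}\le(n-1)\sum_{j=\ell}^r\lambda_j+(r-\ell+1)\lambda_{r+1}.$$
   Context: For an $n\times n$ matrix $A$ and $k\in\{1,\dots,n\}$, $A_k$ denotes the $(n-1)\times(n-1)$ principal submatrix obtained by deleting the $k$-th row and $k$-th column of $A$. *)

From HB Require Import structures.
From mathcomp Require Import all_boot all_order all_algebra.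
Set Implicit Arguments. Unset Strict Implicit. Unset Printing Implicit Defensive.
Import Order.TTheory GRing.Theory Num.Theory.
Local Open Scope ring_scope.

(* A_k : principal submatrix of A : 'M_(n.+1) obtained by deleting row k and
   column k (here k is 0-based). *)
Definition principal_sub (C : numClosedFieldType) (n : nat)
  (A : 'M[C]_n.+1) (k : 'I_n.+1) : 'M[C]_n := row' k (col' k A).

Definition is_eigs (C : numClosedFieldType) (n : nat) (A : 'M[C]_n) (s : seq C) : Prop :=
  sorted (fun x y : C => y <= x) s /\
  char_poly A = \prod_(x <- s) ('X - x%:P).

(* Lower bound: for each k, pick an orthonormal family of r vectors that are
   orthogonal to e_k and lie in the span of the first r + 1 eigenvectors of A
   (dimension count).  Compressing A_k to this family and applying Cauchy
   interlacing bounds the eigenvalues mu_{k,j} below by the Rayleigh quotients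
   of the family, which are convex combinations of the lambda_i.  Summed over
   k, the weights of lambda_i lie in [0, n - 1] (the k-th summand is at most
   1 - |U_ik|^2 for the unitary U diagonalizing A), vanish for i > r + 1 and
   have total mass n (r - l + 1); a rearrangement argument gives the bound.  The upper
   bound is the lower bound for -A. *)

From HB Require Import structures.
From mathcomp Require Import all_boot all_order all_algebra all_fingroup.
From mathcomp Require Import zify ring.

Set Implicit Arguments. Unset Strict Implicit. Unset Printing Implicit Defensive.
Import Order.TTheory GRing.Theory Num.Theory.
Local Open Scope ring_scope.
Local Open Scope sesquilinear_scope.

Local Notation diag_seq s := (diag_mx (\row_i s`_i)).

Section Spectrum.
Variable C : numClosedFieldType.

Lemma adjmxM m n p (A : 'M[C]_(m, n)) (B : 'M[C]_(n, p)) :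
  (A *m B)^t* = B^t* *m A^t*.
Proof. by rewrite trmx_mul map_mxM. Qed.

Lemma adjmxB m n (A B : 'M[C]_(m, n)) : (A - B)^t* = A^t* - B^t*.
Proof. by apply/matrixP => i j; rewrite !mxE rmorphB. Qed.

Lemma hermitian_adjP n (A : 'M[C]_n) : reflect (A^t* = A) (A \is hermsymmx).
Proof.
apply: (iffP idP) => [/is_hermitianmxP {2}->|AA]; first by rewrite expr0 scale1r.
by apply/is_hermitianmxP; rewrite expr0 scale1r AA.
Qed.

Lemma hermitian_conjmx m n (F : 'M[C]_(m, n)) (H : 'M[C]_n) :
  H \is hermsymmx -> F *m H *m F^t* \is hermsymmx.
Proof.
by move=> /hermitian_adjP HH; apply/hermitian_adjP; rewrite !adjmxM trmxCK HH mulmxA.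
Qed.

Lemma hermitian_oppmx n (A : 'M[C]_n) : A \is hermsymmx -> - A \is hermsymmx.
Proof.
move=> /hermitian_adjP AA; apply/hermitian_adjP; rewrite -{2}AA.
by apply/matrixP => i j; rewrite !mxE rmorphN.
Qed.

Lemma unitarymx_adjK n (U : 'M[C]_n) : U \is unitarymx -> U^t* *m U = 1%:M.
Proof. by move/unitarymxP/mulmx1C. Qed.

Lemma quad_diagE p q (Y : 'M[C]_(p, q)) d j :
  (Y *m diag_mx d *m Y^t*) j j = \sum_i d 0 i * `|Y j i| ^+ 2.
Proof.
rewrite mul_mx_diag mxE; apply: eq_bigr => i _.
by rewrite !mxE normCK mulrAC mulrC mulrA.
Qed.

Lemma gram_rowE p q (Y : 'M[C]_(p, q)) j : (Y *m Y^t*) j j = \sum_i `|Y j i| ^+ 2.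
Proof. by rewrite mxE; apply: eq_bigr => i _; rewrite !mxE normCK. Qed.

Lemma gram_colE p q (Y : 'M[C]_(p, q)) i : (Y^t* *m Y) i i = \sum_j `|Y j i| ^+ 2.
Proof. by rewrite mxE; apply: eq_bigr => j _; rewrite !mxE normCK mulrC. Qed.

Lemma unitarymx_row_norm p q (Y : 'M[C]_(p, q)) j :
  Y \is unitarymx -> \sum_i `|Y j i| ^+ 2 = 1.
Proof. by move=> /unitarymxP YY; rewrite -gram_rowE YY mxE eqxx. Qed.

Lemma gram_row_gt0 q (v : 'rV[C]_q) : v != 0 -> 0 < (v *m v^t*) 0 0.
Proof.
move=> v0; rewrite gram_rowE lt_def sumr_ge0 ?andbT => [|i _]; last exact: exprn_ge0.
apply: contra v0 => /eqP/psumr_eq0P v_eq0; apply/eqP/matrixP => i j.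
rewrite ord1 mxE; apply/eqP; rewrite -normr_eq0 -(sqrf_eq0 _) v_eq0 //.
by move=> k _; exact: exprn_ge0.
Qed.

Lemma unitarymx_col_norm_le p q t (Y : 'M[C]_(p, q)) (X : 'M[C]_(q, t)) i :
  Y \is unitarymx -> ((Y *m X)^t* *m (Y *m X)) i i <= (X^t* *m X) i i.
Proof.
move=> /unitarymxP YY; pose Z := X - Y^t* *m (Y *m X).
have ZZ : Z^t* *m Z = X^t* *m X - (Y *m X)^t* *m (Y *m X).
  rewrite /Z adjmxB mulmxBl !mulmxBr !adjmxM trmxCK.
  by rewrite !mulmxA -(mulmxA _ Y (Y^t*)) YY mulmx1 subrr subr0.
rewrite -subr_ge0 (_ : _ - _ = (Z^t* *m Z) i i); last by rewrite ZZ !mxE.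
by rewrite gram_colE; apply: sumr_ge0 => j _; exact: exprn_ge0.
Qed.

Lemma mul_pid_mxE p q (a : 'M[C]_(p, q)) r i j :
  (a *m pid_mx r) i j = if (j < r)%N then a i j else 0.
Proof.
rewrite mxE (bigD1 j) //= big1 ?addr0 => [|k kj]; rewrite !mxE.
  by rewrite eqxx /=; case: ifP; rewrite ?mulr1 ?mulr0.
by rewrite val_eqE (negPf kj) /= mulr0.
Qed.

Lemma mul_copid_mxE p q (a : 'M[C]_(p, q)) r i j :
  (a *m copid_mx r) i j = if (j < r)%N then 0 else a i j.
Proof.
rewrite /copid_mx mulmxBr mulmx1 2!mxE mul_pid_mxE.
by case: ifP; rewrite ?subrr ?subr0.
Qed.

Lemma char_poly_conj n (P A : 'M[C]_n) : P \in unitmx ->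
  char_poly (invmx P *m A *m P) = char_poly A.
Proof.
move=> Pu; have PP : invmx P *m P = 1%:M by rewrite mulVmx.
rewrite /char_poly /char_poly_mx.
have -> : 'X%:M - map_mx polyC (invmx P *m A *m P) =
    map_mx polyC (invmx P) *m ('X%:M - map_mx polyC A) *m map_mx polyC P.
  rewrite mulmxBr mulmxBl !map_mxM -!mulmxA; congr (_ - _).
  by rewrite -scalar_mxC mulmxA -map_mxM PP map_mx1 mul1mx.
by rewrite !det_mulmx mulrAC -det_mulmx -map_mxM PP map_mx1 det1 mul1r.
Qed.

Definition sorted_spectrum n (A : 'M[C]_n) (s : seq C) : Prop :=
  [/\ size s = n, forall i j, (i <= j < n)%N -> s`_j <= s`_i &
      exists2 U : 'M[C]_n, U \is unitarymx & A = U^t* *m diag_seq s *m U].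

Lemma sorted_ge_nth (s : seq C) : sorted (fun x y : C => y <= x) s ->
  forall i j, (i <= j < size s)%N -> s`_j <= s`_i.
Proof.
move=> ss i j /andP [ij js]; have ge_trans : transitive (fun x y : C => y <= x).
  by move=> a b c ab bc; exact: le_trans bc ab.
apply: (sorted_leq_nth ge_trans (fun x => lexx x) 0 ss) => //; rewrite inE //.
exact: leq_ltn_trans ij js.
Qed.

Lemma unitary_diag_perm n (M : 'M[C]_n) (d : 'rV[C]_n) (s : seq C) :
  M \is unitarymx -> perm_eq s [seq d 0 i | i <- enum 'I_n] ->
  exists2 U : 'M[C]_n, U \is unitarymx &
    M^t* *m diag_mx d *m M = U^t* *m diag_seq s *m U.
Proof.
move=> Mu; have -> : [seq d 0 i | i <- enum 'I_n] = [tuple d 0 i | i < n] by [].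
case/tuple_permP => p sE; pose P : 'M[C]_n := perm_mx p.
have Pu : P \is unitarymx.
  by apply/unitarymxP; rewrite tr_perm_mx map_perm_mx -perm_mxM mulgV perm_mx1.
exists (P *m M); first exact: mul_unitarymx.
have -> : diag_mx d = P^t* *m diag_seq s *m P.
  apply/matrixP => i j; rewrite mul_mx_diag !mxE.
  rewrite (bigD1 (p^-1 i)%g) //= big1 ?addr0 => [|k kp]; rewrite !mxE.
    by rewrite sE -tnth_nth !tnth_mktuple permKV eqxx conjC1 mul1r mulr_natr.
  have -> : (p k == i) = false.
    by apply/negbTE; apply: contra kp => /eqP <-; rewrite permK.
  by rewrite conjC0 !mul0r.
by rewrite adjmxM !mulmxA.
Qed.

Lemma hermitian_sorted_spectrum n (A : 'M[C]_n) :
  A \is hermsymmx -> exists s, sorted_spectrum A s.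
Proof.
move=> Ah; have AE := orthomx_spectralP (hermitian_normalmx Ah).
have /mxOverP dr := hermitian_spectral_diag_real Ah.
set d := spectral_diag A in AE dr; set ds := [seq d 0 i | i <- enum 'I_n].
have ds_real : all (fun x => x \is Num.real) ds by apply/allP => x /mapP [i _ ->].
pose s := sort (fun x y : C => y <= x) ds.
have sd : perm_eq s ds by rewrite perm_sort.
have [U Uu UE] := unitary_diag_perm (spectral_unitarymx A) sd.
have ssz : size s = n by rewrite (perm_size sd) size_map size_enum_ord.
exists s; split => //.
- rewrite -{1}ssz; apply: sorted_ge_nth.
  apply: (sort_sorted_in (P := fun x => x \is Num.real)) => //.
  by move=> x y xr yr; rewrite /= orbC real_leVge.
- by exists U => //; rewrite {1}AE invmx_unitary ?spectral_unitarymx.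
Qed.

Lemma is_eigs_sorted_spectrum n (A : 'M[C]_n) s :
  A \is hermsymmx -> is_eigs A s -> sorted_spectrum A s.
Proof.
move=> Ah [ss cs]; have AE := orthomx_spectralP (hermitian_normalmx Ah).
have Pu := spectral_unitarymx A; set d := spectral_diag A in AE.
have sd : perm_eq s [seq d 0 i | i <- enum 'I_n].
  apply: prod_XsubC_eq; rewrite -cs {1}AE char_poly_conj ?unitarymx_unit //.
  rewrite char_poly_trig ?diag_mx_is_trig // big_map big_enum /=.
  by apply: eq_bigr => i _; rewrite mxE eqxx mulr1n.
have ssz : size s = n by rewrite (perm_size sd) size_map size_enum_ord.
have [U Uu UE] := unitary_diag_perm Pu sd.
split => //; first by rewrite -{1}ssz; exact: sorted_ge_nth.
by exists U => //; rewrite {1}AE invmx_unitary // UE.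
Qed.

Lemma nth_rev_opp (s : seq C) i : (i < size s)%N ->
  (rev (map -%R s))`_i = - s`_(size s - i.+1).
Proof.
move=> iz; rewrite nth_rev ?size_map // (nth_map 0) ?size_map //.
by rewrite subnSK // leq_subr.
Qed.

Lemma sorted_spectrumN n (A : 'M[C]_n) s :
  sorted_spectrum A s -> sorted_spectrum (- A) (rev (map -%R s)).
Proof.
move=> [sz s_ge [U Uu AE]]; split.
- by rewrite size_rev size_map.
- move=> i j /andP [ij jn]; rewrite !nth_rev_opp ?sz ?lerN2; try lia.
  by apply: s_ge; apply/andP; split; lia.
have -> : - A = U^t* *m diag_mx (\row_i (- s`_i)) *m U.
  have -> : diag_mx (\row_i (- s`_i)) = - diag_seq s :> 'M[C]_n.
    by apply/matrixP => i j; rewrite !mxE mulNrn.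
  by rewrite AE mulmxN mulNmx.
apply: unitary_diag_perm => //.
have -> : [seq (\row_i (- s`_i)) 0 i | i <- enum 'I_n] = map -%R s.
  apply: (@eq_from_nth _ 0); first by rewrite !size_map -enumT size_enum_ord sz.
  move=> i; rewrite size_map size_enum_ord => iN.
  by rewrite (nth_map (Ordinal iN)) ?size_enum_ord // mxE (nth_map 0) ?sz // nth_enum_ord.
by rewrite perm_rev.
Qed.

End Spectrum.

Section Interlacing.
Variable C : numClosedFieldType.

Lemma mxrank_mulmx_unitary p m n (X : 'M[C]_(p, m)) (U : 'M[C]_(m, n)) :
  U \is unitarymx -> \rank (X *m U) = \rank X.
Proof. by move=> Uu; rewrite mxrankMfree // /row_free mxrank_unitary. Qed.

Lemma capmx_nonzero_row m1 m2 n (S : 'M[C]_(m1, n)) (T : 'M[C]_(m2, n)) :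
  (n < \rank S + \rank T)%N -> exists2 v : 'rV[C]_n, (v <= S :&: T)%MS & v != 0.
Proof.
move=> rkST; apply/rowV0Pn; rewrite -mxrank_eq0 -lt0n.
by have := mxrank_sum_cap S T; have := rank_leq_col (S + T)%MS; lia.
Qed.

Lemma quad_diag_ge_head s (d : seq C) (a : 'rV[C]_s) (j : 'I_s) :
  (forall i k, (i <= k < s)%N -> d`_k <= d`_i) ->
  (forall i : 'I_s, (j < i)%N -> a 0 i = 0) ->
  d`_j * (a *m a^t*) 0 0 <= (a *m diag_seq d *m a^t*) 0 0.
Proof.
move=> d_ge a0; rewrite quad_diagE gram_rowE mulr_sumr; apply: ler_sum => i _.
rewrite mxE; case: (leqP i j) => [ij|ji]; last by rewrite a0 // normr0 expr0n /= !mulr0.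
by rewrite ler_wpM2r ?exprn_ge0 // d_ge // ij /=.
Qed.

Lemma quad_diag_le_tail s (d : seq C) (a : 'rV[C]_s) (j : 'I_s) :
  (forall i k, (i <= k < s)%N -> d`_k <= d`_i) ->
  (forall i : 'I_s, (i < j)%N -> a 0 i = 0) ->
  (a *m diag_seq d *m a^t*) 0 0 <= d`_j * (a *m a^t*) 0 0.
Proof.
move=> d_ge a0; rewrite quad_diagE gram_rowE mulr_sumr; apply: ler_sum => i _.
rewrite mxE; case: (ltnP i j) => [ij|ji]; first by rewrite a0 // normr0 expr0n /= !mulr0.
by rewrite ler_wpM2r ?exprn_ge0 // d_ge // ji /=.
Qed.

(* Cauchy interlacing for compressions [F H F^*] to [s]-dimensional subspaces;
   min-max: a unit vector in the span of the first [j+1] eigenvectors of the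
   compression and of the last [N-j] eigenvectors of [H] exists by counting
   dimensions, and its Rayleigh quotient lies between [g_j] and [h_j]. *)
Lemma compression_eig_le N s (H : 'M[C]_N) (F : 'M[C]_(s, N)) h g j :
  sorted_spectrum H h -> F \is unitarymx ->
  sorted_spectrum (F *m H *m F^t*) g -> (j < s)%N -> g`_j <= h`_j.
Proof.
move=> [_ h_ge [U Uu HE]] Fu [_ g_ge [W Wu GE]] js.
have jN : (j < N)%N by rewrite (leq_trans js) // -(mxrank_unitary Fu) rank_leq_col.
pose F' := W *m F; have F'u : F' \is unitarymx by exact: mul_unitarymx.
have F'HF' : F' *m H *m F'^t* = diag_seq g.
  have : W *m (F *m H *m F^t*) *m W^t* = diag_seq g.
    by rewrite GE !mulmxA (unitarymxP Wu) mul1mx mulmxtVK.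
  by rewrite adjmxM !mulmxA.
pose S := (pid_mx j.+1 : 'M[C]_s) *m F'; pose T := copid_mx j *m U.
have [v vST v0] : exists2 v : 'rV[C]_N, (v <= S :&: T)%MS & v != 0.
  apply: capmx_nonzero_row; rewrite !mxrank_mulmx_unitary // rank_pid_mx //.
  by rewrite rank_copid_mx ?(ltnW jN) //; lia.
have /submxP [a va] : (v <= S)%MS by apply: submx_trans vST (capmxSl _ _).
have /submxP [b vb] : (v <= T)%MS by apply: submx_trans vST (capmxSr _ _).
pose a' := a *m (pid_mx j.+1 : 'M[C]_s); pose b' := b *m copid_mx j.
have va' : v = a' *m F' by rewrite va /a' mulmxA.
have vb' : v = b' *m U by rewrite vb /b' mulmxA.
have vHv_g : v *m H *m v^t* = a' *m diag_seq g *m a'^t*.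
  by rewrite va' -F'HF' adjmxM !mulmxA.
have vHv_h : v *m H *m v^t* = b' *m diag_seq h *m b'^t*.
  by rewrite vb' HE adjmxM !mulmxA mulmxtVK // -!(mulmxA _ U) (unitarymxP Uu) mulmx1.
have vv_a : v *m v^t* = a' *m a'^t* by rewrite va' adjmxM mulmxA mulmxtVK.
have vv_b : v *m v^t* = b' *m b'^t* by rewrite vb' adjmxM mulmxA mulmxtVK.
rewrite -(ler_pM2r (gram_row_gt0 v0)); apply: (@le_trans _ _ ((v *m H *m v^t*) 0 0)).
  rewrite vHv_g vv_a (quad_diag_ge_head (j := Ordinal js)) // => i /= ji.
  by rewrite mul_pid_mxE ltnS leqNgt ji.
rewrite vHv_h vv_b (quad_diag_le_tail (j := Ordinal jN)) // => i ij.
by rewrite mul_copid_mxE ifT.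
Qed.

End Interlacing.

Section PrincipalSubmatrices.
Variable C : numClosedFieldType.

Lemma unitary_submx_exists r m n (S : 'M[C]_(m, n)) : (r <= \rank S)%N ->
  exists2 Y : 'M[C]_(r, n), Y \is unitarymx & (Y <= S)%MS.
Proof.
move=> rS; pose B := (pid_mx r : 'M[C]_(r, \rank S)) *m row_base S.
have Bfree : row_free B by rewrite /row_free mxrankMfree ?row_base_free // rank_pid_mx.
exists (schmidt B); first by rewrite schmidt_unitarymx // (leq_trans rS) ?rank_leq_col.
by rewrite (eqmx_schmidt_free Bfree) (submx_trans (submxMl _ _)) ?eq_row_base.
Qed.

Lemma unitarymx_factor p q n (c : 'M[C]_(p, q)) (E : 'M[C]_(q, n)) :
  E \is unitarymx -> c *m E \is unitarymx -> c \is unitarymx.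
Proof. by move=> Eu /unitarymxP; rewrite adjmxM mulmxA mulmxtVK // => /unitarymxP. Qed.

Definition delmx m (k : 'I_m.+1) : 'M[C]_(m, m.+1) :=
  \matrix_(i, j) (lift k i == j)%:R.

Lemma delmx_mulE m k p (B : 'M[C]_(m.+1, p)) i j :
  (delmx k *m B) i j = B (lift k i) j.
Proof.
rewrite mxE (bigD1 (lift k i)) //= big1 => [|t ti]; rewrite !mxE.
  by rewrite eqxx mul1r addr0.
by rewrite eq_sym (negPf ti) mul0r.
Qed.

Lemma mul_delmx_adjE m k p (B : 'M[C]_(p, m.+1)) i j :
  (B *m (delmx k)^t*) i j = B i (lift k j).
Proof.
rewrite mxE (bigD1 (lift k j)) //= big1 => [|t tj]; rewrite !mxE.
  by rewrite eqxx conjC1 mulr1 addr0.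
by rewrite eq_sym (negPf tj) conjC0 mulr0.
Qed.

Lemma delmx_unitary m (k : 'I_m.+1) : delmx k \is unitarymx.
Proof.
apply/unitarymxP/matrixP => i j; rewrite mul_delmx_adjE !mxE.
by rewrite (inj_eq (@lift_inj _ k)).
Qed.

Lemma principal_subE m (A : 'M[C]_m.+1) k :
  principal_sub A k = delmx k *m A *m (delmx k)^t*.
Proof. by apply/matrixP => i j; rewrite mul_delmx_adjE delmx_mulE !mxE. Qed.

Lemma principal_sub_hermitian m (A : 'M[C]_m.+1) k :
  A \is hermsymmx -> principal_sub A k \is hermsymmx.
Proof. by move=> Ah; rewrite principal_subE hermitian_conjmx. Qed.

Lemma delmx_adj_col_norm m (U : 'M[C]_m.+1) k i : U \is unitarymx ->
  \sum_j `|(delmx k *m U^t*) j i| ^+ 2 = 1 - `|U i k| ^+ 2.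
Proof.
move=> Uu; rewrite -(unitarymx_row_norm i Uu) (bigD1_ord k) //= addrC addrK.
by apply: eq_bigr => j _; rewrite delmx_mulE !mxE norm_conjC.
Qed.

(* For each [k], the eigenvalues [mu_0 >= ... >= mu_(q-1)] of [A_k] dominate
   the Rayleigh quotients, with respect to [A = U^* diag(lam) U], of [q]
   orthonormal vectors lying in the span of the first [q+1] eigenvectors of
   [A] and orthogonal to [e_k]; [P] holds their coordinates in the eigenbasis. *)
Lemma principal_sub_test_mx m (A U : 'M[C]_m.+1) lam (k : 'I_m.+1) mu q :
  A \is hermsymmx -> U \is unitarymx -> A = U^t* *m diag_seq lam *m U ->
  sorted_spectrum (principal_sub A k) mu -> (q <= m)%N ->
  exists P : 'M[C]_(q, m.+1), [/\ P \is unitarymx,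
    forall (j : 'I_q) (i : 'I_m.+1), (q < i)%N -> P j i = 0,
    forall i, \sum_j `|P j i| ^+ 2 <= 1 - `|U i k| ^+ 2 &
    forall j : 'I_q, \sum_(i < m.+1) lam`_i * `|P j i| ^+ 2 <= mu`_j].
Proof.
move=> Ah Uu AE muk qm; pose E := delmx k.
pose V := (pid_mx q.+1 : 'M[C]_m.+1) *m U.
have [Y Yu YVE] : exists2 Y : 'M[C]_(q, m.+1), Y \is unitarymx & (Y <= V :&: E)%MS.
  apply: unitary_submx_exists.
  have := mxrank_sum_cap V E; have := rank_leq_col (V + E)%MS.
  by rewrite /V mxrank_mulmx_unitary // rank_pid_mx // (mxrank_unitary (delmx_unitary k)); lia.
have /submxP [c YE] : (Y <= E)%MS by apply: submx_trans YVE (capmxSr _ _).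
have /submxP [d YV] : (Y <= V)%MS by apply: submx_trans YVE (capmxSl _ _).
have cu : c \is unitarymx by apply: (unitarymx_factor (delmx_unitary k)); rewrite -YE.
have [gam gamG] := hermitian_sorted_spectrum
  (hermitian_conjmx c (principal_sub_hermitian k Ah)).
have gam_le j : (j < q)%N -> gam`_j <= mu`_j := compression_eig_le muk cu gamG.
case: gamG => _ _ [W Wu GE].
pose P := W *m Y *m U^t*.
exists P; split.
- by rewrite mul_unitarymx ?trmxC_unitary // mul_unitarymx.
- move=> j i qi; rewrite /P YV /V !mulmxA mulmxtVK // mul_pid_mxE ifF //; lia.
- move=> i; rewrite -gram_colE.
  have -> : P = W *m (c *m (E *m U^t*)) by rewrite /P YE !mulmxA.
  rewrite adjmxM mulmxA -(mulmxA _ (W^t*)) unitarymx_adjK // mulmx1.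
  by rewrite (le_trans (unitarymx_col_norm_le _ _ cu)) // gram_colE delmx_adj_col_norm.
- move=> j; apply: le_trans (gam_le j (ltn_ord j)).
  have -> : gam`_j = (W *m (c *m principal_sub A k *m c^t*) *m W^t*) j j.
    by rewrite GE !mulmxA (unitarymxP Wu) mul1mx mulmxtVK // !mxE eqxx mulr1n.
  rewrite principal_subE (_ : W *m _ *m W^t* = P *m diag_seq lam *m P^t*).
    by rewrite quad_diagE; apply: ler_sum => i _; rewrite [X in _ <= X * _]mxE.
  by rewrite /P AE YE !adjmxM trmxCK !mulmxA.
Qed.

End PrincipalSubmatrices.

Section EigenvalueSums.
Variable C : numClosedFieldType.

Lemma big_nat_ordE n a b (F : nat -> C) : (b <= n)%N ->
  \sum_(a <= j < b) F j = \sum_(i < n | (a <= i < b)%N) F i.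
Proof.
move=> bn; rewrite (big_nat_widenl _ _ _ _ _ (leq0n a)) (big_nat_widen _ _ _ _ _ bn).
by rewrite big_mkord.
Qed.

Lemma sum_rev_opp (s : seq C) a b : (a <= b <= size s)%N ->
  \sum_(size s - b <= j < size s - a) (rev (map -%R s))`_j = - \sum_(a <= j < b) s`_j.
Proof.
move=> /andP [ab bs]; rewrite !(big_nat_ordE _ _ (leq_subr _ _)) (big_nat_ordE _ _ bs).
rewrite (reindex_inj rev_ord_inj) -sumrN; apply: eq_big => [i|i _] /=;
  have := ltn_ord i.
  by move=> ilt; apply/idP/idP => /andP [h1 h2]; apply/andP; split; lia.
by move=> ilt; rewrite nth_rev_opp; [congr (- s`_ _); lia | lia].
Qed.

(* A rearrangement inequality: with [w_i := z_i - c [p < i <= q]] the defect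
   is [\sum_i (lam_i - lam_p) w_i], and [lam_i - lam_p] and [w_i] have the
   same sign for every [i]. *)
Lemma weighted_sum_ge n (lam : seq C) (z : 'I_n -> C) c t p q :
  (forall i j, (i <= j < n)%N -> lam`_j <= lam`_i) ->
  (forall i, 0 <= z i) -> (forall i, z i <= c) ->
  (forall i : 'I_n, (q < i)%N -> z i = 0) ->
  \sum_i z i = c * (q - p)%:R + t -> (p <= q < n)%N ->
  t * lam`_p + c * \sum_(p.+1 <= j < q.+1) lam`_j <= \sum_(i < n) lam`_i * z i.
Proof.
move=> lam_ge z_ge0 z_le z0 zsum /andP [pq qn].
pose w i := z i - (if (p < i <= q)%N then c else 0).
have blockE (F : nat -> C) :
    \sum_(p.+1 <= j < q.+1) F j = \sum_(i < n) if (p < i <= q)%N then F i else 0.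
  by rewrite (big_nat_ordE _ _ qn) big_mkcond.
have wsum : \sum_i w i = t.
  by rewrite sumrB zsum -blockE sumr_const_nat subSS mulr_natr addrAC subrr add0r.
have defectE : \sum_(i < n) lam`_i * z i
      - (t * lam`_p + c * \sum_(p.+1 <= j < q.+1) lam`_j)
    = \sum_(i < n) (lam`_i - lam`_p) * w i.
  rewrite -wsum blockE mulr_suml mulr_sumr -big_split -sumrB /=.
  by apply: eq_bigr => i _; rewrite /w; case: ifP => _; ring.
rewrite -subr_ge0 defectE sumr_ge0 // => i _; rewrite /w.
case: (ltngtP i p) => [ip|pi|->] /=; last by rewrite subrr mul0r.
  by rewrite subr0 mulr_ge0 // subr_ge0 lam_ge //; lia.
case: (leqP i q) => [iq|qi]; last by rewrite subr0 z0 // mulr0.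
by apply: mulr_le0; rewrite subr_le0 // lam_ge //; lia.
Qed.

(* The lower bound of the theorem, with 0-based indices [p < q]. Summing the
   test matrices of [principal_sub_test_mx] over [k] gives weights [z_i] on
   the eigenvalues of [A] to which [weighted_sum_ge] applies with [c = m]. *)
Lemma sum_principal_eig_ge m (A : 'M[C]_m.+1) lam (mu : 'I_m.+1 -> seq C) p q :
  A \is hermsymmx -> sorted_spectrum A lam ->
  (forall k, sorted_spectrum (principal_sub A k) (mu k)) -> (p < q)%N -> (q <= m)%N ->
  (q - p)%:R * lam`_p + m%:R * \sum_(p.+1 <= j < q.+1) lam`_j
    <= \sum_(k < m.+1) \sum_(p <= j < q) (mu k)`_j.
Proof.
move=> Ah [_ lam_ge [U Uu AE]] muA pq qm.
case/fin_all_exists: (fun k => principal_sub_test_mx Ah Uu AE (muA k) qm) => P PP.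
pose z i := \sum_k \sum_(j < q | (p <= j)%N) `|P k j i| ^+ 2.
have blockE (F : nat -> C) : \sum_(p <= j < q) F j = \sum_(j < q | (p <= j)%N) F j.
  by rewrite big_geq_mkord.
rewrite (eq_bigr _ (fun k _ => blockE (fun j => (mu k)`_j))).
apply: le_trans (weighted_sum_ge (z := z) lam_ge _ _ _ _ _) _.
- by move=> i; do 2![apply: sumr_ge0 => ? _]; exact: exprn_ge0.
- move=> i; apply: le_trans (_ : \sum_k (1 - `|U i k| ^+ 2) <= _).
    apply: ler_sum => k _; case: (PP k) => _ _ col_le _; apply: le_trans (col_le i).
    rewrite [leRHS](bigID (fun j : 'I_q => (p <= j)%N)) lerDl.
    by apply: sumr_ge0 => j _; exact: exprn_ge0.
  by rewrite sumrB unitarymx_row_norm // sumr_const card_ord mulrSr addrK.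
- move=> i qi; apply: big1 => k _; apply: big1 => j _.
  by case: (PP k) => _ P0 _ _; rewrite P0 // normr0 expr0n.
- rewrite /z exchange_big /= (eq_bigr (fun=> (q - p)%:R)) => [|k _].
    by rewrite sumr_const card_ord mulrSr mulr_natl.
  rewrite exchange_big /= (eq_bigr (fun=> 1)) => [|j _].
    by rewrite -(blockE (fun=> 1)) sumr_const_nat.
  by case: (PP k) => Pu _ _ _; rewrite unitarymx_row_norm.
- by rewrite ltnW // ltnS.
rewrite (eq_bigr (fun i : 'I_m.+1 =>
  \sum_k \sum_(j < q | (p <= j)%N) lam`_i * `|P k j i| ^+ 2)).
  rewrite exchange_big /=; apply: ler_sum => k _; rewrite exchange_big /=.
  by apply: ler_sum => j _; case: (PP k) => _ _ _; apply.
by move=> i _; rewrite mulr_sumr; apply: eq_bigr => k _; rewrite mulr_sumr.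
Qed.

Lemma sum_principal_eig_le m (A : 'M[C]_m.+1) lam (mu : 'I_m.+1 -> seq C) p q :
  A \is hermsymmx -> sorted_spectrum A lam ->
  (forall k, sorted_spectrum (principal_sub A k) (mu k)) -> (p < q)%N -> (q <= m)%N ->
  \sum_(k < m.+1) \sum_(p <= j < q) (mu k)`_j
    <= m%:R * \sum_(p <= j < q) lam`_j + (q - p)%:R * lam`_q.
Proof.
move=> Ah lamA muA pq qm.
have muN k : sorted_spectrum (principal_sub (- A) k) (rev (map -%R (mu k))).
  rewrite (_ : principal_sub _ _ = - principal_sub A k); first exact: sorted_spectrumN.
  by apply/matrixP => i j; rewrite !mxE.
have [lam_sz _ _] := lamA; have mu_sz k : size (mu k) = m by case: (muA k).
have lamNE : \sum_((m - q).+1 <= j < (m - p).+1) (rev (map -%R lam))`_j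
    = - \sum_(p <= j < q) lam`_j.
  rewrite -!subSn ?(leq_trans (ltnW pq)) // -lam_sz sum_rev_opp //.
  by rewrite lam_sz (ltnW pq) (leqW qm).
have muNE k : \sum_(m - q <= j < m - p) (rev (map -%R (mu k)))`_j
    = - \sum_(p <= j < q) (mu k)`_j.
  by rewrite -(mu_sz k) sum_rev_opp // mu_sz (ltnW pq) qm.
have mpq : (m - q < m - p)%N by lia.
have := sum_principal_eig_ge (hermitian_oppmx Ah) (sorted_spectrumN lamA) muN mpq
  (leq_subr _ _).
rewrite lamNE (eq_bigr _ (fun k _ => muNE k)) nth_rev_opp lam_sz; last by lia.
rewrite (_ : (m - p - (m - q) = q - p)%N); last by lia.
rewrite (_ : (m.+1 - (m - q).+1 = q)%N); last by lia.
by rewrite sumrN !mulrN -opprD lerN2 addrC.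
Qed.

End EigenvalueSums.

Theorem theorem3p5 (C : numClosedFieldType) (m : nat) (A : 'M[C]_m.+1)
  (lam : seq C) (mu : 'I_m.+1 -> seq C) (l r : nat) :
  (1 <= m)%N ->
  A \is hermsymmx ->
  is_eigs A lam ->
  (forall k : 'I_m.+1, is_eigs (principal_sub A k) (mu k)) ->
  (1 <= l)%N -> (l <= r)%N -> (r <= m)%N ->
  (r - l + 1)%:R * lam`_(l.-1) + m%:R * \sum_(l <= j < r.+1) lam`_j
    <= \sum_(k < m.+1) \sum_(l <= j < r.+1) (mu k)`_(j.-1)
  /\
  \sum_(k < m.+1) \sum_(l <= j < r.+1) (mu k)`_(j.-1)
    <= m%:R * \sum_(l <= j < r.+1) lam`_(j.-1) + (r - l + 1)%:R * lam`_r.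
Proof.
(* [1 <= m] is implied by [1 <= l <= r <= m]. *)
move=> _ Ah lam_eigs mu_eigs; case: l => // p _ pr rm.
have lamA := is_eigs_sorted_spectrum Ah lam_eigs.
have muA k := is_eigs_sorted_spectrum (principal_sub_hermitian k Ah) (mu_eigs k).
have shiftE (F : nat -> C) : \sum_(p.+1 <= j < r.+1) F j.-1 = \sum_(p <= j < r) F j.
  by rewrite big_add1.
have muE : \sum_(k < m.+1) \sum_(p.+1 <= j < r.+1) (mu k)`_j.-1
    = \sum_(k < m.+1) \sum_(p <= j < r) (mu k)`_j.
  by apply: eq_bigr => k _; rewrite shiftE.
rewrite muE shiftE addn1 subnSK //=.
split; first exact: sum_principal_eig_ge Ah lamA muA pr rm.
exact: sum_principal_eig_le Ah lamA muA pr rm.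
Qed.
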